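(* For $\alpha\ge1$ and $y>0$ let $G_\alpha(y)=\sum_{k\in\mathbb{Z}}e^{-\pi\alpha k^2/y}\cos\big(2\pi k(\tfrac12-\tfrac1{8y^2})\big)$. Then $$\max_{y\ge\frac{\sqrt3}2+\frac1{4\sqrt\alpha}}G_\alpha(y)=G_\alpha\Big(\tfrac{\sqrt3}2+\tfrac1{4\sqrt\alpha}\Big)\le G_\alpha\Big(\tfrac{\sqrt3}2\Big)-\tfrac{2\sqrt\alpha}{3}e^{-\frac{2\pi\alpha}{\sqrt3}}.$$ *)

From Stdlib Require Import Reals ZArith.
From Coquelicot Require Import Coquelicot.
Open Scope R_scope.

Definition Gterm (alpha y : R) (k : Z) : R :=
  exp (- PI * alpha * (IZR k) ^ 2 / y) *
  cos (2 * PI * IZR k * (1 / 2 - 1 / (8 * y ^ 2))).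

(* G_alpha(y) = sum_{k in Z} Gterm alpha y k, written as the k = 0 term plus
   the (absolutely convergent) series over k = n+1 and k = -(n+1), n >= 0. *)
Definition G (alpha y : R) : R :=
  Gterm alpha y 0 +
  Series (fun n : nat => Gterm alpha y (Z.of_nat (S n)) + Gterm alpha y (- Z.of_nat (S n))).

From Stdlib Require Import Reals Lra Lia Psatz.
From Coquelicot Require Import Coquelicot.
Open Scope R_scope.

(* Pairing k with -k, G alpha y = 1 + 2 sum_{k >= 1} q^{k^2} cos (k (pi - th)) with
   q = e^{-pi alpha / y} and th = pi / (4 y^2), i.e. 1 - 2 q cos th + O(q^4).
   While q is small the leading term decides: as y grows q increases and th decreases, so a
   termwise comparison shows G alpha y <= G alpha y_star; at y = sqrt 3 / 2 the angle is pi / 3,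
   and the gap comes from q at y_star exceeding q at sqrt 3 / 2 by a factor 1 + Omega (sqrt alpha).
   For large y (pi alpha / y <= 0.65) summation by parts twice against the first differences of
   k |-> e^{-L k^2}, which rise and then fall, bounds |G alpha y| by about sqrt (pi alpha / y) <= 0.81,
   below G alpha y_star >= 0.847. *)

Lemma exp_INR_mul (n : nat) (x : R) : exp (INR n * x) = exp x ^ n.
Proof.
  induction n as [|n IH].
  - rewrite Rmult_0_l, exp_0; reflexivity.
  - rewrite S_INR, Rmult_plus_distr_r, Rmult_1_l, exp_plus, IH. simpl. ring.
Qed.

Lemma pow_one_add_div_le_exp (n : nat) (x : R) :
  (0 < n)%nat -> 0 <= x -> (1 + x / INR n) ^ n <= exp x.
Proof.
  intros hn hx. assert (hn' : 0 < INR n) by (apply lt_0_INR; exact hn).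
  replace x with (INR n * (x / INR n)) at 2 by (field; lra).
  rewrite exp_INR_mul. apply pow_incr. split.
  - assert (0 <= x / INR n) by (apply Rdiv_le_0_compat; lra). lra.
  - apply exp_ineq1_le.
Qed.

Lemma exp_ge_twice x : 0 <= x -> 2 * x <= exp x.
Proof.
  intros hx. pose proof (pow_one_add_div_le_exp 2 x ltac:(lia) hx) as H.
  replace (INR 2) with 2 in H by (simpl; ring).
  assert (0 <= (1 - x / 2) ^ 2) by (apply pow2_ge_0). nra.
Qed.

Lemma exp_opp_le_of_exp_ge x a b : a <= x -> 0 < b -> / b <= exp a -> exp (- x) <= b.
Proof.
  intros hax hb hab. rewrite exp_Ropp.
  assert (exp a <= exp x) by (destruct (Req_dec a x); [subst; lra | left; apply exp_increasing; lra]).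
  rewrite <- (Rinv_inv b). apply Rinv_le_contravar; [apply Rinv_0_lt_compat; lra | lra].
Qed.

Lemma exp_opp_le_055 x : 0.65 <= x -> exp (- x) <= 0.55.
Proof.
  intros h. apply (exp_opp_le_of_exp_ge x 0.65); [lra | lra |].
  eapply Rle_trans; [| apply (pow_one_add_div_le_exp 8); [lia | lra]]. simpl; lra.
Qed.

Lemma exp_opp_le_026 x : 1.5 <= x -> exp (- x) <= 0.26.
Proof.
  intros h. apply (exp_opp_le_of_exp_ge x 1.5); [lra | lra |].
  eapply Rle_trans; [| apply (pow_one_add_div_le_exp 8); [lia | lra]]. simpl; lra.
Qed.

Lemma exp_opp_le_00757 x : 2.688 <= x -> exp (- x) <= 0.0757.
Proof.
  intros h. apply (exp_opp_le_of_exp_ge x 2.688); [lra | lra |].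
  eapply Rle_trans; [| apply (pow_one_add_div_le_exp 32); [lia | lra]]. simpl; lra.
Qed.

Definition gauss (L : R) (k : nat) : R := exp (- L * INR k ^ 2).

Definition theta_term (L ph : R) (n : nat) : R := 2 * gauss L (S n) * cos (INR (S n) * ph).

Lemma gauss0 L : gauss L 0 = 1.
Proof. unfold gauss. replace (- L * INR 0 ^ 2) with 0 by (simpl; ring). apply exp_0. Qed.

Lemma gauss_gt0 L k : 0 < gauss L k.
Proof. apply exp_pos. Qed.

Lemma gauss_pow L k : gauss L k = exp (- L) ^ (k * k).
Proof. unfold gauss. rewrite <- exp_INR_mul, mult_INR. f_equal. ring. Qed.

Lemma exp_opp_bounds L : 0 <= L -> 0 < exp (- L) <= 1.
Proof.
  intros hL. split; [apply exp_pos |]. rewrite <- exp_0.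
  destruct (Req_dec L 0) as [-> | hL0]; [rewrite Ropp_0; lra |].
  left. apply exp_increasing. lra.
Qed.

Lemma exp_opp_lt1 L : 0 < L -> exp (- L) < 1.
Proof. intros hL. rewrite <- exp_0. apply exp_increasing. lra. Qed.

Lemma pow_le_pow_of_le1 r m n : 0 <= r <= 1 -> (m <= n)%nat -> r ^ n <= r ^ m.
Proof.
  intros hr hmn. replace n with (m + (n - m))%nat by lia. rewrite pow_add.
  pose proof (pow_le r m (proj1 hr)).
  assert (r ^ (n - m) <= 1) by (rewrite <- (pow1 (n - m)); apply pow_incr; lra).
  nra.
Qed.

Lemma gauss_le_geom L k : 0 <= L -> gauss L k <= exp (- L) ^ k.
Proof.
  intros hL. rewrite gauss_pow. apply pow_le_pow_of_le1.
  - pose proof (exp_opp_bounds L hL); lra.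
  - destruct k; simpl; lia.
Qed.

Lemma is_lim_seq_gauss L : 0 < L -> is_lim_seq (gauss L) 0.
Proof.
  intros hL. pose proof (exp_opp_bounds L (Rlt_le _ _ hL)) as hq.
  apply is_lim_seq_le_le with (fun _ => 0) (fun N => exp (- L) ^ N).
  - intros N. split; [left; apply gauss_gt0 | apply gauss_le_geom; lra].
  - apply is_lim_seq_const.
  - apply is_lim_seq_geom. rewrite Rabs_pos_eq by lra. apply exp_opp_lt1, hL.
Qed.

Lemma ex_series_geom_dominated (u : nat -> R) K r : 0 <= r < 1 ->
  (forall n, Rabs (u n) <= K * r ^ n) -> ex_series u /\ Rabs (Series u) <= K / (1 - r).
Proof.
  intros hr hu.
  assert (hg : ex_series (fun n => K * r ^ n)).
  { apply (ex_series_scal_l K (fun n => r ^ n)). apply ex_series_geom. rewrite Rabs_pos_eq; lra. }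
  assert (habs : ex_series (fun n => Rabs (u n))).
  { apply (ex_series_le (fun n => Rabs (u n)) (fun n => K * r ^ n)); [intros n | exact hg].
    change (norm (Rabs (u n))) with (Rabs (Rabs (u n))). rewrite Rabs_Rabsolu. apply hu. }
  split; [apply ex_series_Rabs, habs |].
  eapply Rle_trans; [apply Series_Rabs, habs |].
  eapply Rle_trans; [apply Series_le with (2 := hg); intros n; split; [apply Rabs_pos | apply hu] |].
  rewrite Series_scal_l, Series_geom by (rewrite Rabs_pos_eq; lra). unfold Rdiv; lra.
Qed.

Lemma ex_series_theta L ph : 0 < L -> ex_series (theta_term L ph).
Proof.
  intros hL. pose proof (exp_opp_bounds L (Rlt_le _ _ hL)) as hq.
  pose proof (exp_opp_lt1 L hL).
  refine (proj1 (ex_series_geom_dominated _ (2 * exp (- L)) (exp (- L)) ltac:(lra) _)).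
  intros n. unfold theta_term.
  rewrite !Rabs_mult, (Rabs_pos_eq 2), (Rabs_pos_eq (gauss L (S n))) by (lra || apply Rlt_le, gauss_gt0).
  pose proof (gauss_le_geom L (S n) (Rlt_le _ _ hL)) as hg. simpl in hg.
  pose proof (gauss_gt0 L (S n)). pose proof (Rabs_pos (cos (INR (S n) * ph))).
  assert (Rabs (cos (INR (S n) * ph)) <= 1) by (apply Rabs_le; apply COS_bound).
  nra.
Qed.

Lemma G_theta alpha y : 0 < y ->
  G alpha y = 1 + Series (theta_term (PI * alpha / y) (PI - PI / (4 * y ^ 2))).
Proof.
  intros hy. unfold G. f_equal.
  - unfold Gterm. simpl IZR.
    replace (- PI * alpha * 0 ^ 2 / y) with 0 by (field; lra).
    rewrite Rmult_0_r, Rmult_0_l, exp_0, cos_0. ring.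
  - apply Series_ext. intros n. unfold Gterm, theta_term, gauss.
    rewrite opp_IZR, <- INR_IZR_INZ.
    replace (- PI * alpha * (- INR (S n)) ^ 2 / y) with (- (PI * alpha / y) * INR (S n) ^ 2) by (field; lra).
    replace (- PI * alpha * INR (S n) ^ 2 / y) with (- (PI * alpha / y) * INR (S n) ^ 2) by (field; lra).
    replace (2 * PI * - INR (S n) * (1 / 2 - 1 / (8 * y ^ 2)))
      with (- (INR (S n) * (PI - PI / (4 * y ^ 2)))) by (field; lra).
    replace (2 * PI * INR (S n) * (1 / 2 - 1 / (8 * y ^ 2)))
      with (INR (S n) * (PI - PI / (4 * y ^ 2))) by (field; lra).
    rewrite cos_neg. ring.
Qed.

Definition gdiff (L : R) (m : nat) : R := gauss L m - gauss L (S m).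

Definition gdiff2 (L : R) (m : nat) : R := gdiff L m - gdiff L (S m).

Lemma gdiff_ge0 L k : 0 <= L -> 0 <= gdiff L k.
Proof.
  intros hL. unfold gdiff, gauss. pose proof (pos_INR k) as hk. rewrite S_INR.
  destruct (Req_dec L 0) as [-> | hL0].
  - rewrite !Ropp_0, !Rmult_0_l. lra.
  - left. apply Rlt_0_minus, exp_increasing. nra.
Qed.

(* Mean value theorem: the squared slope 4 L^2 c^2 e^{-2 L c^2} equals L * 2 w e^{-w} with
   w = 2 L c^2, and 2 w <= e^w. *)
Lemma gdiff_le_sqrt L k : 0 < L -> gdiff L k <= sqrt L.
Proof.
  intros hL. unfold gdiff, gauss.
  set (f := fun x => exp (- L * x ^ 2)).
  destruct (MVT_gen f (INR k) (INR (S k)) (fun x => -2 * L * x * exp (- L * x ^ 2)))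
    as [c [hc Hc]].
  - intros x _. unfold f. auto_derive; [auto | simpl; ring].
  - intros z _. apply continuity_pt_filterlim, (ex_derive_continuous f).
    unfold f. auto_derive. auto.
  - assert (hk : INR k <= INR (S k)) by (rewrite S_INR; lra).
    rewrite (Rmin_left _ _ hk), (Rmax_right _ _ hk) in hc.
    replace (INR (S k) - INR k) with 1 in Hc by (rewrite S_INR; ring).
    change (exp (- L * INR k ^ 2) - exp (- L * INR (S k) ^ 2)) with (f (INR k) - f (INR (S k))).
    replace (f (INR k) - f (INR (S k))) with (2 * L * c * exp (- L * c ^ 2)) by lra.
    pose proof (pos_INR k).
    set (w := 2 * L * c ^ 2). assert (hw : 0 <= w) by (unfold w; nra).
    assert (E : exp (- L * c ^ 2) * exp (- L * c ^ 2) * exp w = 1).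
    { rewrite <- !exp_plus, <- exp_0. f_equal. unfold w. ring. }
    pose proof (exp_ge_twice w hw). pose proof (exp_pos (- L * c ^ 2)).
    apply Rsqr_incr_0_var; [| apply sqrt_pos]. rewrite Rsqr_sqrt by lra. unfold Rsqr.
    set (e := exp (- L * c ^ 2)) in *.
    replace (2 * L * c * e * (2 * L * c * e)) with (L * (2 * w * (e * e))) by (unfold w; ring).
    assert (2 * w * (e * e) <= 1) by nra.
    nra.
Qed.

Lemma cosh_le a b : 0 <= a <= b -> exp a + exp (- a) <= exp b + exp (- b).
Proof.
  intros [ha hab]. rewrite !exp_Ropp.
  assert (h1 : 1 <= exp a) by (pose proof (exp_ineq1_le a); lra).
  assert (h2 : exp a <= exp b) by (destruct (Req_dec a b); [subst; lra | left; apply exp_increasing; lra]).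
  assert (E : exp b + / exp b - (exp a + / exp a) = (exp b - exp a) * (1 - / (exp a * exp b)))
    by (field; split; apply exp_neq_0).
  assert (/ (exp a * exp b) <= 1) by (rewrite <- Rinv_1; apply Rinv_le_contravar; nra).
  nra.
Qed.

(* With q = e^{-L} and E_n = e^{2 L n}, the weights satisfy f_{n+1} = f_n q / E_n and
   f_{n-1} = f_n q E_n, so [gdiff L n <= gdiff L (n - 1)] reads 2 <= q (E_n + 1 / E_n),
   whose right-hand side increases with n. *)
Lemma gdiff_decr_step L m : 0 <= L ->
  gdiff L (S m) <= gdiff L m -> gdiff L (S (S m)) <= gdiff L (S m).
Proof.
  intros hL H. unfold gdiff in *.
  assert (shift : forall n, gauss L (S (S n)) = gauss L (S n) * exp (- L) / exp (2 * L * INR (S n))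
                         /\ gauss L n = gauss L (S n) * exp (- L) * exp (2 * L * INR (S n))).
  { intros n. unfold gauss, Rdiv. rewrite <- exp_Ropp, <- !exp_plus.
    split; f_equal; rewrite !S_INR; ring. }
  destruct (shift m) as [A1 A2]. destruct (shift (S m)) as [B1 B2].
  set (q := exp (- L)) in *.
  set (E1 := exp (2 * L * INR (S m))) in *. set (E2 := exp (2 * L * INR (S (S m)))) in *.
  assert (hE : E1 + / E1 <= E2 + / E2).
  { unfold E1, E2. rewrite <- !exp_Ropp. apply cosh_le. rewrite !S_INR. pose proof (pos_INR m). nra. }
  pose proof (gauss_gt0 L (S m)). pose proof (gauss_gt0 L (S (S m))).
  assert (0 < q) by apply exp_pos. assert (0 < E1) by apply exp_pos. assert (0 < E2) by apply exp_pos.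
  set (P1 := gauss L (S m)) in *. set (P2 := gauss L (S (S m))) in *.
  assert (hA : 2 <= q * (E1 + / E1)).
  { rewrite A1, A2 in H. apply Rmult_le_reg_l with P1; [lra |].
    unfold Rdiv in H. nra. }
  assert (2 <= q * (E2 + / E2)) by nra.
  rewrite B1, B2. unfold Rdiv. nra.
Qed.

Fixpoint gdiff2_var (L : R) (N : nat) : R :=
  match N with O => 0 | S m => gdiff2_var L m + Rabs (gdiff2 L m) end.

(* [gdiff L] increases and then decreases, so its total variation is at most twice its maximum. *)
Lemma gdiff2_var_le L M : 0 <= L -> (forall k, gdiff L k <= M) ->
  forall N, gdiff2_var L N + gdiff L 0 + gdiff L N <= 2 * M.
Proof.
  intros hL hM.
  enough (H : forall N, gdiff2_var L N + gdiff L 0 + gdiff L N <= 2 * M /\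
    (gdiff2_var L N = gdiff L N - gdiff L 0 \/
     exists m, N = S m /\ gdiff L (S m) <= gdiff L m)) by (intros N; apply H).
  induction N as [|N [IH1 IH2]].
  - simpl. pose proof (hM 0%nat). split; [lra | left; ring].
  - simpl gdiff2_var. unfold gdiff2.
    destruct (Rle_lt_dec (gdiff L (S N)) (gdiff L N)) as [Hle | Hlt].
    + rewrite Rabs_pos_eq by lra. split; [lra |]. right. exists N. auto.
    + rewrite Rabs_left by lra.
      destruct IH2 as [E | [m [-> Hm]]].
      * pose proof (hM (S N)). split; [lra | left; lra].
      * pose proof (gdiff_decr_step L m hL Hm). lra.
Qed.

Fixpoint theta_partial (L ph : R) (N : nat) : R :=
  match N with O => 1 | S m => theta_partial L ph m + theta_term L ph m end.

Fixpoint abel_rem (L ph : R) (N : nat) : R :=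
  match N with
  | O => - (2 * gdiff L 0)
  | S m => abel_rem L ph m + 2 * gdiff2 L m * cos (INR (S m) * ph)
  end.

Lemma cos_INR_mul_rec ph n :
  cos (INR (S (S n)) * ph) + cos (INR n * ph) = 2 * cos ph * cos (INR (S n) * ph).
Proof.
  rewrite form1, !S_INR.
  replace (((INR n + 1 + 1) * ph - INR n * ph) / 2) with ph by field.
  replace (((INR n + 1 + 1) * ph + INR n * ph) / 2) with ((INR n + 1) * ph) by field.
  ring.
Qed.

(* Summation by parts twice: multiplying by 2 - 2 cos ph turns the weights into second differences. *)
Lemma theta_partial_abel L ph N :
  (2 - 2 * cos ph) * theta_partial L ph N + abel_rem L ph N =
  2 * (gauss L (S N) * cos (INR N * ph) - gauss L N * cos (INR (S N) * ph)).
Proof.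
  induction N as [|N IH].
  - simpl. unfold gdiff. rewrite Rmult_0_l, Rmult_1_l, cos_0, gauss0. ring.
  - cbn [theta_partial abel_rem]. unfold theta_term, gdiff2, gdiff. unfold gdiff in IH.
    pose proof (f_equal (Rmult (2 * gauss L (S N))) (cos_INR_mul_rec ph N)).
    lra.
Qed.

Lemma abel_rem_abs_le L ph N : 0 <= L -> Rabs (abel_rem L ph N) <= 2 * gdiff L 0 + 2 * gdiff2_var L N.
Proof.
  intros hL. induction N as [|N IH]; cbn [abel_rem gdiff2_var].
  - rewrite Rabs_Ropp, Rabs_pos_eq by (pose proof (gdiff_ge0 L 0 hL); lra). lra.
  - eapply Rle_trans; [apply Rabs_triang |]. rewrite !Rabs_mult, (Rabs_pos_eq 2) by lra.
    assert (Rabs (cos (INR (S N) * ph)) <= 1) by (apply Rabs_le, COS_bound).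
    pose proof (Rabs_pos (gdiff2 L N)). nra.
Qed.

Lemma theta_partial_abs_le L ph N : 0 < L ->
  Rabs (theta_partial L ph N) * (2 - 2 * cos ph) <= 4 * sqrt L + 2 * (gauss L (S N) + gauss L N).
Proof.
  intros hL.
  pose proof (theta_partial_abel L ph N) as Hid.
  pose proof (abel_rem_abs_le L ph N (Rlt_le _ _ hL)) as Hrem.
  pose proof (gdiff2_var_le L (sqrt L) (Rlt_le _ _ hL) (fun k => gdiff_le_sqrt L k hL) N) as Hvar.
  pose proof (gdiff_ge0 L N (Rlt_le _ _ hL)).
  assert (Hbd : Rabs (gauss L (S N) * cos (INR N * ph) - gauss L N * cos (INR (S N) * ph))
                <= gauss L (S N) + gauss L N).
  { eapply Rle_trans; [apply Rabs_triang |]. rewrite Rabs_Ropp, !Rabs_mult.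
    rewrite (Rabs_pos_eq (gauss L (S N))), (Rabs_pos_eq (gauss L N)) by (left; apply gauss_gt0).
    assert (Rabs (cos (INR N * ph)) <= 1) by (apply Rabs_le, COS_bound).
    assert (Rabs (cos (INR (S N) * ph)) <= 1) by (apply Rabs_le, COS_bound).
    pose proof (gauss_gt0 L N). pose proof (gauss_gt0 L (S N)). nra. }
  assert (hc : 0 <= 2 - 2 * cos ph) by (pose proof (COS_bound ph); lra).
  rewrite <- (Rabs_pos_eq _ hc), <- Rabs_mult, Rmult_comm.
  replace ((2 - 2 * cos ph) * theta_partial L ph N)
    with (2 * (gauss L (S N) * cos (INR N * ph) - gauss L N * cos (INR (S N) * ph)) - abel_rem L ph N)
    by lra.
  eapply Rle_trans; [apply Rabs_triang |].
  rewrite Rabs_Ropp, Rabs_mult, (Rabs_pos_eq 2) by lra. lra.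
Qed.

Lemma theta_partial_sum_n L ph N : theta_partial L ph (S N) = 1 + sum_n (theta_term L ph) N.
Proof.
  induction N as [|N IH].
  - rewrite sum_O. reflexivity.
  - rewrite sum_Sn. cbn [theta_partial] in *. rewrite IH. unfold plus. simpl. ring.
Qed.

Lemma theta_abs_le_sqrt L ph : 0 < L ->
  Rabs (1 + Series (theta_term L ph)) * (2 - 2 * cos ph) <= 4 * sqrt L.
Proof.
  intros hL.
  assert (Hl : is_lim_seq (fun N => Rabs (theta_partial L ph (S N)) * (2 - 2 * cos ph))
                          (Rabs (1 + Series (theta_term L ph)) * (2 - 2 * cos ph))).
  { apply (is_lim_seq_scal_r (fun N => Rabs (theta_partial L ph (S N))) (2 - 2 * cos ph)
      (Rabs (1 + Series (theta_term L ph)))).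
    apply (is_lim_seq_abs _ (1 + Series (theta_term L ph))).
    apply is_lim_seq_ext with (fun N => 1 + sum_n (theta_term L ph) N).
    { intros N. symmetry. apply theta_partial_sum_n. }
    apply is_lim_seq_plus'; [apply is_lim_seq_const |].
    apply Series_correct, ex_series_theta, hL. }
  assert (Hr : is_lim_seq (fun N => 4 * sqrt L + 2 * (gauss L (S (S N)) + gauss L (S N)))
                          (4 * sqrt L + 2 * (0 + 0))).
  { pose proof (is_lim_seq_gauss L hL) as H0.
    pose proof (proj1 (is_lim_seq_incr_1 (gauss L) 0) H0) as H1.
    pose proof (proj1 (is_lim_seq_incr_1 (fun N => gauss L (S N)) 0) H1) as H2.
    apply is_lim_seq_plus'; [apply is_lim_seq_const |].
    apply (is_lim_seq_scal_l _ 2 (0 + 0)), is_lim_seq_plus'; assumption. }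
  pose proof (is_lim_seq_le _ _ _ _ (fun N => theta_partial_abs_le L ph (S N) hL) Hl Hr) as H.
  simpl in H. lra.
Qed.

Lemma sin_abs_le_abs z : Rabs (sin z) <= Rabs z.
Proof.
  assert (H : forall x, 0 <= x -> Rabs (sin x) <= x).
  { intros x hx. apply Rabs_le. split.
    - destruct (Rle_dec x PI) as [hxpi | hxpi].
      + pose proof (sin_ge_0 x hx hxpi). lra.
      + pose proof (SIN_bound x). pose proof PI2_1. lra.
    - destruct (Req_dec x 0) as [-> | hx0]; [rewrite sin_0; lra |].
      left. apply sin_lt_x. lra. }
  destruct (Rle_dec 0 z) as [hz | hz].
  - rewrite (Rabs_pos_eq z hz). apply H, hz.
  - replace z with (- - z) by ring. rewrite sin_neg, !Rabs_Ropp, (Rabs_left z) by lra. apply H. lra.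
Qed.

Lemma sin_abs_INR_mul_PI_add k x : Rabs (sin (INR k * PI + x)) = Rabs (sin x).
Proof.
  induction k as [|k IH].
  - rewrite Rmult_0_l, Rplus_0_l. reflexivity.
  - rewrite S_INR. replace ((INR k + 1) * PI + x) with ((INR k * PI + x) + PI) by ring.
    rewrite neg_sin, Rabs_Ropp. exact IH.
Qed.

Lemma sin_ge_07 x : 0 <= x <= 4 / 3 -> 0.7 * x <= sin x.
Proof.
  intros hx. pose proof PI2_3_2 as hpi.
  destruct (sin_bound x 0 (proj1 hx) ltac:(lra)) as [H _].
  unfold sin_approx, sin_term in H. simpl in H. nra.
Qed.

Lemma cos_ge_half t : 0 <= t <= PI / 3 -> 1 / 2 <= cos t.
Proof.
  intros ht. rewrite <- cos_PI3. pose proof PI_RGT_0.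
  destruct (Req_dec t (PI / 3)) as [-> | hne]; [lra |].
  left. apply cos_decreasing_1; lra.
Qed.

Lemma cos_ge_quad t : 0 <= t <= 1 -> 1 - t ^ 2 / 2 <= cos t.
Proof.
  intros ht. pose proof PI2_1 as hpi.
  destruct (cos_bound t 0 ltac:(lra) ltac:(lra)) as [H _].
  unfold cos_approx, cos_term in H. simpl in H. lra.
Qed.

(* Both sides factor through the sines of the half-sum a and half-difference b of th and th0;
   |sin (k x)| <= k x on one side and sin x >= 0.7 x on the other give the constant 2.1 > 1 / 0.7^2. *)
Lemma cos_mul_PI_sub_diff_le th th0 k : 0 <= th -> th <= th0 -> th0 <= 4 / 3 ->
  Rabs (cos (INR k * (PI - th)) - cos (INR k * (PI - th0)))
  <= 2.1 * INR (k * k) * (cos th - cos th0).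
Proof.
  intros h1 h2 h3. rewrite !form2.
  set (a := (th + th0) / 2). set (b := (th0 - th) / 2).
  replace ((INR k * (PI - th) - INR k * (PI - th0)) / 2) with (INR k * b) by (unfold b; field).
  replace ((INR k * (PI - th) + INR k * (PI - th0)) / 2) with (INR k * PI + - (INR k * a))
    by (unfold a; field).
  replace ((th - th0) / 2) with (- b) by (unfold b; field). fold a.
  rewrite sin_neg, !Rabs_mult, sin_abs_INR_mul_PI_add, sin_neg, Rabs_Ropp.
  rewrite (Rabs_left (-2)) by lra.
  pose proof (pos_INR k).
  assert (ha : 0 <= a) by (unfold a; lra). assert (hb : 0 <= b) by (unfold b; lra).
  pose proof (sin_abs_le_abs (INR k * b)) as Sb. pose proof (sin_abs_le_abs (INR k * a)) as Sa.
  rewrite (Rabs_pos_eq (INR k * b)) in Sb by nra. rewrite (Rabs_pos_eq (INR k * a)) in Sa by nra.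
  pose proof (sin_ge_07 a ltac:(unfold a; lra)). pose proof (sin_ge_07 b ltac:(unfold b; lra)).
  pose proof (Rabs_pos (sin (INR k * b))). pose proof (Rabs_pos (sin (INR k * a))).
  assert (Rabs (sin (INR k * b)) * Rabs (sin (INR k * a)) <= (INR k * b) * (INR k * a))
    by (apply Rmult_le_compat; lra).
  assert (0.7 * a * (0.7 * b) <= sin a * sin b) by (apply Rmult_le_compat; nra).
  rewrite mult_INR. nra.
Qed.

(* Ratio test for the weights (j + 2)^2 q^((j+2)^2 - 1): consecutive ratios are at most 9/4 * q^5 < 1/4. *)
Lemma sq_mul_pow_le_geom q j : 0 <= q <= 0.55 ->
  INR ((j + 2) * (j + 2)) * q ^ (j * j + 4 * j + 3) <= 4 * q ^ 3 * (1 / 4) ^ j.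
Proof.
  intros hq. induction j as [|j IH].
  - simpl. lra.
  - replace (S j * S j + 4 * S j + 3)%nat with ((j * j + 4 * j + 3) + (2 * j + 5))%nat by lia.
    rewrite pow_add.
    assert (h5 : q ^ (2 * j + 5) <= 0.06).
    { apply Rle_trans with (q ^ 5); [apply pow_le_pow_of_le1; [lra | lia] |].
      apply Rle_trans with (0.55 ^ 5); [apply pow_incr; lra | simpl; lra]. }
    assert (hI : INR ((S j + 2) * (S j + 2)) <= 9 / 4 * INR ((j + 2) * (j + 2))).
    { rewrite !mult_INR, !plus_INR, S_INR. simpl. pose proof (pos_INR j). nra. }
    pose proof (pow_le q (j * j + 4 * j + 3) (proj1 hq)). pose proof (pow_le q (2 * j + 5) (proj1 hq)).
    pose proof (pos_INR ((S j + 2) * (S j + 2))).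
    set (P := q ^ (j * j + 4 * j + 3)) in *. set (Q := q ^ (2 * j + 5)) in *.
    set (I1 := INR ((j + 2) * (j + 2))) in *. set (I2 := INR ((S j + 2) * (S j + 2))) in *.
    assert (I2 * P <= 9 / 4 * I1 * P) by (apply Rmult_le_compat_r; lra).
    assert (I2 * P * Q <= 9 / 4 * I1 * P * 0.06) by (apply Rmult_le_compat; nra).
    assert (0 <= q ^ 3 * (1 / 4) ^ j) by (apply Rmult_le_pos; apply pow_le; lra).
    simpl ((1 / 4) ^ S j). lra.
Qed.

Lemma pow_sub_pow_le x y m : 0 <= y <= x -> x ^ S m - y ^ S m <= INR (S m) * x ^ m * (x - y).
Proof.
  intros hxy. induction m as [|m IH].
  - simpl. lra.
  - change (x ^ S (S m)) with (x * x ^ S m). change (y ^ S (S m)) with (y * y ^ S m).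
    assert (y ^ S m <= x ^ S m) by (apply pow_incr; lra).
    assert (x * (x ^ S m - y ^ S m) <= x * (INR (S m) * x ^ m * (x - y))) by (apply Rmult_le_compat_l; lra).
    assert (y ^ S m * (x - y) <= x ^ S m * (x - y)) by (apply Rmult_le_compat_r; lra).
    rewrite S_INR. change (x ^ S m) with (x * x ^ m) in *. lra.
Qed.

Lemma gauss_shift2 L j : gauss L (S (S j)) = exp (- L) * exp (- L) ^ (j * j + 4 * j + 3).
Proof. rewrite gauss_pow. replace (S (S j) * S (S j))%nat with (S (j * j + 4 * j + 3)) by lia. reflexivity. Qed.

Lemma theta_tail_abs_le L ph : 0 < L -> exp (- L) <= 0.55 ->
  Rabs (Series (fun k => theta_term L ph (S k))) <= 32 / 3 * exp (- L) ^ 4.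
Proof.
  intros hL hq. pose proof (exp_pos (- L)) as hq0. set (q := exp (- L)) in *.
  enough (H : forall j, Rabs (theta_term L ph (S j)) <= 8 * q ^ 4 * (1 / 4) ^ j).
  { destruct (ex_series_geom_dominated _ (8 * q ^ 4) (1 / 4) ltac:(lra) H) as [_ HB]. lra. }
  intros j. unfold theta_term. rewrite gauss_shift2. fold q.
  pose proof (sq_mul_pow_le_geom q j ltac:(lra)) as hg.
  replace (INR ((j + 2) * (j + 2))) with (INR (S (S j)) ^ 2) in hg
    by (cbn [pow]; rewrite Rmult_1_r, <- mult_INR; f_equal; lia).
  assert (HI : 1 <= INR (S (S j)) ^ 2) by (rewrite !S_INR; pose proof (pos_INR j); nra).
  pose proof (pow_le q (j * j + 4 * j + 3) ltac:(lra)). pose proof (pow_le (1 / 4) j ltac:(lra)).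
  set (P := q ^ (j * j + 4 * j + 3)) in *. set (R4 := (1 / 4) ^ j) in *.
  assert (Rabs (cos (INR (S (S j)) * ph)) <= 1) by (apply Rabs_le, COS_bound).
  rewrite !Rabs_mult, (Rabs_pos_eq 2), (Rabs_pos_eq q), (Rabs_pos_eq P) by lra.
  assert (P <= 4 * q ^ 3 * R4) by nra.
  assert (q * P * Rabs (cos (INR (S (S j)) * ph)) <= q * P)
    by (rewrite <- (Rmult_1_r (q * P)) at 2; apply Rmult_le_compat_l; nra).
  assert (q * P <= q * (4 * q ^ 3 * R4)) by (apply Rmult_le_compat_l; lra).
  replace (q ^ 4) with (q * q ^ 3) by ring. lra.
Qed.

Lemma theta_term0_PI_sub L th : theta_term L (PI - th) 0 = - (2 * exp (- L) * cos th).
Proof.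
  unfold theta_term. rewrite gauss_pow, Rmult_1_l, Rtrigo_facts.cos_pi_minus. simpl. ring.
Qed.

Lemma theta_two_term L th : 0 < L -> exp (- L) <= 0.55 ->
  Rabs (1 + Series (theta_term L (PI - th)) - (1 - 2 * exp (- L) * cos th))
  <= 32 / 3 * exp (- L) ^ 4.
Proof.
  intros hL hq.
  rewrite Series_incr_1 by (apply ex_series_theta; exact hL).
  rewrite theta_term0_PI_sub.
  replace (1 + (- (2 * exp (- L) * cos th) + Series (fun k => theta_term L (PI - th) (S k)))
           - (1 - 2 * exp (- L) * cos th))
    with (Series (fun k => theta_term L (PI - th) (S k))) by ring.
  apply theta_tail_abs_le; assumption.
Qed.

Section ThetaComparison.

Variables (L L0 th th0 : R).
Hypotheses (hL : 0 < L) (hLL0 : L <= L0) (hq : exp (- L) <= 0.55).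
Hypotheses (hth : 0 <= th) (hthth0 : th <= th0) (hth0 : th0 <= 4 / 3).

Let q := exp (- L).
Let q0 := exp (- L0).
Let c := cos th.
Let c0 := cos th0.

Lemma exp_opp_le_exp_opp : q0 <= q.
Proof.
  unfold q, q0. destruct (Req_dec L L0) as [-> | hne]; [lra |].
  left. apply exp_increasing. lra.
Qed.

Lemma cos_le_cos : c0 <= c.
Proof.
  unfold c, c0. pose proof PI2_3_2.
  destruct (Req_dec th th0) as [-> | hne]; [lra |].
  left. apply cos_decreasing_1; lra.
Qed.

(* Beyond the first term, the difference is controlled by the mean value theorem in q and by
   [cos_mul_PI_sub_diff_le] in th, and decays geometrically. *)
Lemma theta_term_succ_diff_le j :
  Rabs (theta_term L (PI - th) (S j) - theta_term L0 (PI - th0) (S j))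
  <= 2 * (4 * q ^ 3 * (q - q0) + 8.4 * q0 ^ 4 * (c - c0)) * (1 / 4) ^ j.
Proof.
  pose proof exp_opp_le_exp_opp as hqq0. pose proof (exp_pos (- L0)) as hq0. fold q0 in hq0.
  assert (hq' : q <= 0.55) by exact hq.
  unfold theta_term. rewrite !gauss_pow. fold q q0.
  replace (S (S j) * S (S j))%nat with (S (j * j + 4 * j + 3)) by lia.
  pose proof (pow_sub_pow_le q q0 (j * j + 4 * j + 3) ltac:(lra)) as Hmv.
  pose proof (sq_mul_pow_le_geom q j ltac:(lra)) as Hg.
  pose proof (sq_mul_pow_le_geom q0 j ltac:(lra)) as Hg0.
  replace (INR (S (j * j + 4 * j + 3))) with (INR ((j + 2) * (j + 2))) in Hmv by (f_equal; lia).
  pose proof (cos_mul_PI_sub_diff_le th th0 (S (S j)) hth hthth0 hth0) as Hcos. fold c c0 in Hcos.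
  replace (S (S j) * S (S j))%nat with ((j + 2) * (j + 2))%nat in Hcos by lia.
  assert (Hc : Rabs (cos (INR (S (S j)) * (PI - th))) <= 1) by (apply Rabs_le, COS_bound).
  pose proof cos_le_cos.
  pose proof (pow_le q0 (j * j + 4 * j + 3) ltac:(lra)). pose proof (pow_le (1 / 4) j ltac:(lra)).
  assert (q0 ^ S (j * j + 4 * j + 3) <= q ^ S (j * j + 4 * j + 3)) by (apply pow_incr; lra).
  set (C := cos (INR (S (S j)) * (PI - th))) in *. set (C0 := cos (INR (S (S j)) * (PI - th0))) in *.
  set (I := INR ((j + 2) * (j + 2))) in *. set (R4 := (1 / 4) ^ j) in *.
  set (P := q ^ (j * j + 4 * j + 3)) in *. set (P0 := q0 ^ (j * j + 4 * j + 3)) in *.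
  set (Q := q ^ S (j * j + 4 * j + 3)) in *. set (Q0 := q0 ^ S (j * j + 4 * j + 3)) in *.
  replace (2 * Q * C - 2 * Q0 * C0) with (2 * ((Q - Q0) * C + q0 * P0 * (C - C0)))
    by (unfold Q0, P0; simpl; ring).
  rewrite Rabs_mult, (Rabs_pos_eq 2) by lra.
  assert (T1 : Rabs ((Q - Q0) * C) <= I * P * (q - q0)).
  { rewrite Rabs_mult, (Rabs_pos_eq (Q - Q0)) by lra.
    apply Rle_trans with (Q - Q0); [| lra].
    rewrite <- (Rmult_1_r (Q - Q0)) at 2. apply Rmult_le_compat_l; lra. }
  assert (T2 : Rabs (q0 * P0 * (C - C0)) <= q0 * (c - c0) * (2.1 * (I * P0))).
  { rewrite Rabs_mult, (Rabs_pos_eq (q0 * P0)) by nra.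
    replace (q0 * (c - c0) * (2.1 * (I * P0))) with (q0 * P0 * (2.1 * I * (c - c0))) by ring.
    apply Rmult_le_compat_l; nra. }
  assert (T3 : I * P * (q - q0) <= 4 * q ^ 3 * R4 * (q - q0)) by (apply Rmult_le_compat_r; lra).
  assert (T4 : q0 * (c - c0) * (2.1 * (I * P0)) <= q0 * (c - c0) * (2.1 * (4 * q0 ^ 3 * R4)))
    by (apply Rmult_le_compat_l; nra).
  pose proof (Rabs_triang ((Q - Q0) * C) (q0 * P0 * (C - C0))).
  replace (q0 ^ 4) with (q0 * q0 ^ 3) by ring. nra.
Qed.

(* The first term -2 q cos th moves down by 2 c (q - q0) + 2 q0 (c - c0); the hypotheses
   on q^3 and q0 make the geometric tail bound a fraction of that. *)
Lemma theta_series_le : exp (- L0) <= 0.1 -> 16 / 3 * exp (- L) ^ 3 <= cos th ->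
  Series (theta_term L (PI - th)) <= Series (theta_term L0 (PI - th0)).
Proof.
  intros hq0 hqc. fold q q0 c in hq0, hqc. assert (hq' : q <= 0.55) by exact hq.
  pose proof exp_opp_le_exp_opp as hqq0. pose proof cos_le_cos as hcc0.
  pose proof (exp_pos (- L0)) as hq0pos. fold q0 in hq0pos.
  assert (ex1 : ex_series (theta_term L (PI - th))) by (apply ex_series_theta; lra).
  assert (ex2 : ex_series (theta_term L0 (PI - th0))) by (apply ex_series_theta; lra).
  apply Rminus_le. rewrite <- Series_minus by assumption.
  rewrite Series_incr_1 by exact (ex_series_minus _ _ ex1 ex2).
  rewrite !theta_term0_PI_sub. fold q q0 c c0.
  set (K := 2 * (4 * q ^ 3 * (q - q0) + 8.4 * q0 ^ 4 * (c - c0))).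
  destruct (ex_series_geom_dominated _ K (1 / 4) ltac:(lra) theta_term_succ_diff_le) as [_ HB].
  apply Rabs_le_between in HB.
  assert (q0 ^ 3 <= 0.001) by (apply Rle_trans with (0.1 ^ 3); [apply pow_incr; lra | simpl; lra]).
  assert (16 / 3 * q ^ 3 * (q - q0) <= c * (q - q0)) by (apply Rmult_le_compat_r; lra).
  assert (q0 * q0 ^ 3 * (c - c0) <= q0 * 0.001 * (c - c0))
    by (apply Rmult_le_compat_r; [lra | apply Rmult_le_compat_l; lra]).
  unfold K in HB. replace (q0 ^ 4) with (q0 * q0 ^ 3) in HB by ring.
  nra.
Qed.

End ThetaComparison.

Lemma G_two_term alpha y : 0 < y -> 0 < alpha -> exp (- (PI * alpha / y)) <= 0.55 ->
  Rabs (G alpha y - (1 - 2 * exp (- (PI * alpha / y)) * cos (PI / (4 * y ^ 2))))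
  <= 32 / 3 * exp (- (PI * alpha / y)) ^ 4.
Proof.
  intros hy ha hq. rewrite G_theta by exact hy.
  apply theta_two_term; [| exact hq].
  apply Rdiv_lt_0_compat; [apply Rmult_lt_0_compat; [apply PI_RGT_0 | exact ha] | exact hy].
Qed.

Lemma sqrt3_bounds : 1.732 <= sqrt 3 <= 1.7321.
Proof.
  pose proof (sqrt_sqrt 3 ltac:(lra)). pose proof (sqrt_pos 3). split; nra.
Qed.

Definition y_star (alpha : R) : R := sqrt 3 / 2 + 1 / (4 * sqrt alpha).

Section GAlpha.

Variable alpha : R.
Hypothesis halpha : 1 <= alpha.

Lemma sqrt_alpha_ge1 : 1 <= sqrt alpha.
Proof. rewrite <- sqrt_1. apply sqrt_le_1_alt. exact halpha. Qed.

Lemma y_star_bounds : sqrt 3 / 2 < y_star alpha <= 1.11605.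
Proof.
  unfold y_star. pose proof sqrt_alpha_ge1. pose proof sqrt3_bounds.
  assert (0 < 1 / (4 * sqrt alpha) <= 1 / 4).
  { split; [apply Rdiv_lt_0_compat; lra |].
    apply Rmult_le_reg_r with (4 * sqrt alpha); [lra |].
    replace (1 / (4 * sqrt alpha) * (4 * sqrt alpha)) with 1 by (field; lra). nra. }
  lra.
Qed.

Lemma pi_alpha_div_y_star_ge : 2.688 <= PI * alpha / y_star alpha.
Proof.
  pose proof y_star_bounds. pose proof sqrt3_bounds. pose proof PI2_3_2.
  apply Rmult_le_reg_r with (y_star alpha); [lra |].
  replace (PI * alpha / y_star alpha * y_star alpha) with (PI * alpha) by (field; lra). nra.
Qed.

Lemma angle_y_star_bounds : 0 < PI / (4 * y_star alpha ^ 2) <= PI / 3.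
Proof.
  pose proof y_star_bounds. pose proof (sqrt_sqrt 3 ltac:(lra)). pose proof (sqrt_pos 3).
  pose proof PI_RGT_0.
  assert (3 / 4 <= y_star alpha ^ 2) by nra.
  split; [apply Rdiv_lt_0_compat; lra |].
  apply Rmult_le_reg_r with (4 * y_star alpha ^ 2); [lra |].
  replace (PI / (4 * y_star alpha ^ 2) * (4 * y_star alpha ^ 2)) with PI by (field; lra). nra.
Qed.

Lemma G_y_star_ge : 0.847 <= G alpha (y_star alpha).
Proof.
  pose proof y_star_bounds as hy0. pose proof sqrt3_bounds.
  pose proof (exp_opp_le_00757 _ pi_alpha_div_y_star_ge) as hq.
  pose proof (G_two_term alpha (y_star alpha) ltac:(lra) ltac:(lra) ltac:(lra)) as Happrox.
  apply Rabs_le_between in Happrox.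
  pose proof (exp_pos (- (PI * alpha / y_star alpha))).
  set (q := exp (- (PI * alpha / y_star alpha))) in *.
  assert (q ^ 4 <= 0.0001) by (apply Rle_trans with (0.0757 ^ 4); [apply pow_incr; lra | simpl; lra]).
  assert (q * cos (PI / (4 * y_star alpha ^ 2)) <= q)
    by (rewrite <- (Rmult_1_r q) at 2; apply Rmult_le_compat_l; [lra | apply COS_bound]).
  lra.
Qed.

(* For large y the Abel bound gives |G| (2 + 2 cos th) <= 4 sqrt L with th = pi / (4 y^2) nearly 0. *)
Lemma G_le_far y : 0 < y -> PI * alpha / y <= 0.65 -> G alpha y <= 0.81.
Proof.
  intros hy hfar. pose proof PI2_3_2. pose proof PI_4.
  set (L := PI * alpha / y) in *. set (th := PI / (4 * y ^ 2)).
  assert (hL : 0 < L) by (apply Rdiv_lt_0_compat; nra).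
  assert (hy46 : 4.6 <= y).
  { assert (L * y = PI * alpha) by (unfold L; field; lra). nra. }
  assert (hth : 0 <= th <= 0.05).
  { unfold th. split; [apply Rlt_le, Rdiv_lt_0_compat; nra |].
    apply Rmult_le_reg_r with (4 * y ^ 2); [nra |].
    replace (PI / (4 * y ^ 2) * (4 * y ^ 2)) with PI by (field; lra). nra. }
  assert (hc : 0.998 <= cos th) by (pose proof (cos_ge_quad th ltac:(lra)); nra).
  assert (hsqrt : sqrt L <= 0.8063).
  { pose proof (sqrt_pos L). pose proof (sqrt_sqrt L ltac:(lra)). nra. }
  pose proof (theta_abs_le_sqrt L (PI - th) hL) as Habel.
  rewrite Rtrigo_facts.cos_pi_minus in Habel.
  rewrite G_theta by exact hy. fold L th.
  pose proof (Rle_abs (1 + Series (theta_term L (PI - th)))).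
  pose proof (Rabs_pos (1 + Series (theta_term L (PI - th)))).
  nra.
Qed.

(* For y >= y_star with q = e^{-pi alpha / y} not too close to 1, G is essentially 1 - 2 q cos th,
   in which q increases and th = pi / (4 y^2) decreases with y. *)
Lemma G_le_near y : y_star alpha <= y -> 0.65 < PI * alpha / y ->
  G alpha y <= G alpha (y_star alpha).
Proof.
  intros hy hnear. pose proof y_star_bounds. pose proof sqrt3_bounds.
  pose proof PI2_3_2. pose proof PI_4. pose proof angle_y_star_bounds as hth0.
  assert (hyp : 0 < y) by lra.
  set (L := PI * alpha / y) in *. set (th := PI / (4 * y ^ 2)).
  assert (hL : 0 < L) by lra.
  assert (hLL0 : L <= PI * alpha / y_star alpha).
  { unfold L, Rdiv. apply Rmult_le_compat_l; [nra |]. apply Rinv_le_contravar; lra. }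
  assert (hthth0 : 0 <= th <= PI / (4 * y_star alpha ^ 2)).
  { unfold th. split; [apply Rlt_le, Rdiv_lt_0_compat; nra |].
    unfold Rdiv. apply Rmult_le_compat_l; [lra |]. apply Rinv_le_contravar; nra. }
  pose proof (exp_pos (- L)).
  assert (hq : exp (- L) <= 0.55) by (apply exp_opp_le_055; lra).
  assert (hcubic : 16 / 3 * exp (- L) ^ 3 <= cos th).
  { destruct (Rle_lt_dec y 2) as [Hy2 | Hy2].
    - assert (exp (- L) <= 0.26).
      { apply exp_opp_le_026. unfold L. apply Rmult_le_reg_r with y; [lra |].
        replace (PI * alpha / y * y) with (PI * alpha) by (field; lra). nra. }
      assert (exp (- L) ^ 3 <= 0.26 ^ 3) by (apply pow_incr; lra).
      assert (1 / 2 <= cos th) by (apply cos_ge_half; lra).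
      simpl in *. lra.
    - assert (hth : 0 <= th <= 0.25).
      { unfold th. split; [apply Rlt_le, Rdiv_lt_0_compat; nra |].
        apply Rmult_le_reg_r with (4 * y ^ 2); [nra |].
        replace (PI / (4 * y ^ 2) * (4 * y ^ 2)) with PI by (field; lra). nra. }
      pose proof (cos_ge_quad th ltac:(lra)).
      assert (exp (- L) ^ 3 <= 0.55 ^ 3) by (apply pow_incr; lra).
      simpl in *. nra. }
  rewrite !G_theta by lra. fold L th. apply Rplus_le_compat_l.
  apply theta_series_le; try lra.
  apply Rle_trans with 0.0757; [apply exp_opp_le_00757, pi_alpha_div_y_star_ge | lra].
Qed.

(* q is multiplied by e^x with x = pi alpha (1 / (sqrt 3 / 2) - 1 / y_star) = pi sqrt alpha / (2 sqrt 3 y_star). *)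
Lemma exp_opp_y_star_ge :
  exp (- (2 * PI * alpha / sqrt 3)) * (1 + 0.775 * sqrt alpha) <= exp (- (PI * alpha / y_star alpha)).
Proof.
  pose proof y_star_bounds. pose proof sqrt3_bounds. pose proof sqrt_alpha_ge1. pose proof PI2_3_2.
  set (s := sqrt 3 / 2) in *. set (y0 := y_star alpha) in *.
  assert (hs : 0.866 <= s <= 0.86605) by (unfold s; lra).
  set (x := 2 * PI * alpha / sqrt 3 - PI * alpha / y0).
  assert (Hx : x * (4 * s * y0) = PI * sqrt alpha).
  { replace (x * (4 * s * y0)) with (4 * PI * alpha * (y0 - s)) by (unfold x, s; field; lra).
    replace (y0 - s) with (1 / (4 * sqrt alpha)) by (unfold y0, y_star; fold s; ring).
    rewrite <- (sqrt_sqrt alpha) at 1 by lra. field. lra. }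
  assert (hx : 0.775 * sqrt alpha <= x).
  { assert (4 * s * y0 <= 3.8664) by nra.
    assert (0 < 4 * s * y0) by nra.
    apply Rmult_le_reg_r with (4 * s * y0); [lra |]. rewrite Hx. nra. }
  replace (exp (- (PI * alpha / y0))) with (exp (- (2 * PI * alpha / sqrt 3)) * exp x)
    by (unfold x; rewrite <- exp_plus; f_equal; ring).
  apply Rmult_le_compat_l; [apply Rlt_le, exp_pos |].
  pose proof (exp_ineq1_le x). lra.
Qed.

(* Both values are 1 - 2 q cos th up to O(q^4), with th = pi / 3 at sqrt 3 / 2 and cos th >= 1 / 2 at y_star. *)
Lemma G_y_star_gap :
  G alpha (y_star alpha) <= G alpha (sqrt 3 / 2) - 2 * sqrt alpha / 3 * exp (- (2 * PI * alpha / sqrt 3)).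
Proof.
  pose proof y_star_bounds. pose proof sqrt3_bounds. pose proof (sqrt_sqrt 3 ltac:(lra)).
  pose proof sqrt_alpha_ge1. pose proof PI2_3_2. pose proof angle_y_star_bounds.
  pose proof exp_opp_y_star_ge as hpq.
  set (s := sqrt 3 / 2) in *. set (y0 := y_star alpha) in *.
  assert (hs : 0.866 <= s <= 0.86605) by (unfold s; lra).
  assert (hLs : PI * alpha / s = 2 * PI * alpha / sqrt 3) by (unfold s; field; lra).
  assert (hp : exp (- (2 * PI * alpha / sqrt 3)) <= 0.0757).
  { apply exp_opp_le_00757. rewrite <- hLs. apply Rmult_le_reg_r with s; [lra |].
    replace (PI * alpha / s * s) with (PI * alpha) by (field; lra). nra. }
  pose proof (exp_opp_le_00757 _ pi_alpha_div_y_star_ge) as hq0. fold y0 in hq0.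
  pose proof (G_two_term alpha s ltac:(lra) ltac:(lra) ltac:(rewrite hLs; lra)) as Gs.
  pose proof (G_two_term alpha y0 ltac:(lra) ltac:(lra) ltac:(lra)) as G0.
  rewrite hLs in Gs.
  replace (PI / (4 * s ^ 2)) with (PI / 3) in Gs by (unfold s; f_equal; simpl; lra).
  rewrite cos_PI3 in Gs. apply Rabs_le_between in Gs, G0.
  assert (1 / 2 <= cos (PI / (4 * y0 ^ 2))) by (apply cos_ge_half; lra).
  pose proof (exp_pos (- (2 * PI * alpha / sqrt 3))). pose proof (exp_pos (- (PI * alpha / y0))).
  set (p := exp (- (2 * PI * alpha / sqrt 3))) in *. set (q0 := exp (- (PI * alpha / y0))) in *.
  assert (p ^ 4 <= p * 0.000434).
  { assert (p ^ 3 <= 0.0757 ^ 3) by (apply pow_incr; lra).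
    replace (p ^ 4) with (p * p ^ 3) by ring. simpl in *. nra. }
  assert (q0 ^ 4 <= q0 * 0.000434).
  { assert (q0 ^ 3 <= 0.0757 ^ 3) by (apply pow_incr; lra).
    replace (q0 ^ 4) with (q0 * q0 ^ 3) by ring. simpl in *. nra. }
  assert (q0 * (1 / 2) <= q0 * cos (PI / (4 * y0 ^ 2))) by (apply Rmult_le_compat_l; lra).
  assert (0 <= p * (sqrt alpha - 1)) by (apply Rmult_le_pos; lra).
  lra.
Qed.

End GAlpha.

Theorem mainTheorem15 (alpha : R) (halpha : 1 <= alpha) :
  let y0 := sqrt 3 / 2 + 1 / (4 * sqrt alpha) in
  (forall y : R, y0 <= y -> G alpha y <= G alpha y0) /\
  G alpha y0 <= G alpha (sqrt 3 / 2)
                - 2 * sqrt alpha / 3 * exp (- (2 * PI * alpha / sqrt 3)).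
Proof.
  intros y0. change y0 with (y_star alpha).
  split; [| exact (G_y_star_gap alpha halpha)].
  intros y hy.
  destruct (Rle_lt_dec (PI * alpha / y) 0.65) as [Hfar | Hnear].
  - pose proof (y_star_bounds alpha halpha). pose proof sqrt3_bounds.
    pose proof (G_le_far alpha halpha y ltac:(lra) Hfar).
    pose proof (G_y_star_ge alpha halpha). lra.
  - exact (G_le_near alpha halpha y hy Hnear).
Qed.
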